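(* Let $f$ be a $C^\infty$ function on $\mathbb R$ with no flat zero, i.e. for every $x$ with $f(x)=0$ there exists $r\in\mathbb N$ with $f^{(r)}(x)\neq0$. Let $F$ be a $C^1$ function on $\mathbb R$ with $\lim_{x\to-\infty}F(x)=-1$ and $\lim_{x\to+\infty}F(x)=1$. Let $a<b$ with $f(a)f(b)\neq0$. Then the number of zeros of $f$ in $[a,b]$ (counted without multiplicity) is finite and $$\mathcal H^0(\{f=0\}\cap[a,b])=\frac12\Big[F\Big(\frac{f'}{f}(b)\Big)-F\Big(\frac{f'}{f}(a)\Big)-\int_a^bF'\Big(\frac{f'(x)}{f(x)}\Big)\Big(\frac{f'(x)}{f(x)}\Big)'dx\Big],$$ where the integrand is defined where $f(x)\neq0$ and the integral is the sum of the (improper) integrals over the open intervals of $[a,b]$ between consecutive zeros of $f$.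
   Context: $\mathcal H^0(\{f=0\}\cap[a,b])$ denotes the number of distinct zeros of $f$ in $[a,b]$. *)

From Stdlib Require Import Reals List Sorted.
From Coquelicot Require Import Coquelicot.
Open Scope R_scope.

Definition smooth (f : R -> R) : Prop :=
  forall (n : nat) (x : R), ex_derive (Derive_n f n) x.

Definition no_flat_zero (f : R -> R) : Prop :=
  forall x : R, f x = 0 -> exists r : nat, Derive_n f r x <> 0.

Definition is_C1 (F : R -> R) : Prop :=
  (forall x : R, ex_derive F x) /\ (forall x : R, continuous (Derive F) x).

Definition logder (f : R -> R) (x : R) : R := Derive f x / f x.

Fixpoint piecewise_improper_integral (h : R -> R) (p : R) (qs : list R) (I : R)
  : Prop :=
  match qs with
  | nil => I = 0
  | q :: qs' => exists I1 I2 : R,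
      is_RInt_gen h (at_right p) (at_left q) I1 /\
      piecewise_improper_integral h q qs' I2 /\ I = I1 + I2
  end.

(** Near a zero [z] of [f] of finite order [r], Cauchy's mean value theorem applied
    successively to the pairs [(f^(j), f^(j+1))], [j = r-1, ..., 0], shows that [f / f']
    tends to [0] with the sign of [x - z].  Hence [f'/f] tends to [+oo] on the right of [z]
    and to [-oo] on its left, so [F (f'/f)] tends to [1] and [-1]; in particular the zeros
    are isolated, hence finitely many in [[a, b]].  Between two consecutive zeros the
    integrand is the derivative of [F (f'/f)], so each improper integral is a difference
    of one-sided limits, and the sum telescopes to [F (f'/f) b - F (f'/f) a - 2 * #zeros]. *)

From Stdlib Require Import Reals List Sorted Wf_nat Lra Lia Classical.
From Coquelicot Require Import Coquelicot.
Open Scope R_scope.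

Lemma ball_Rabs (x e y : R) : ball x e y <-> Rabs (y - x) < e.
Proof. reflexivity. Qed.

Lemma continuous_Rabs_lt (h : R -> R) (p : R) : continuous h p ->
  forall eps, 0 < eps -> exists d, 0 < d /\ forall x, Rabs (x - p) < d -> Rabs (h x - h p) < eps.
Proof.
  intros Hc eps Heps.
  apply continuity_pt_filterlim in Hc.
  destruct (proj1 (continuity_pt_locally h p) Hc (mkposreal eps Heps)) as [d Hd].
  exists d; split; [apply cond_pos | intros x Hx; apply Hd, ball_Rabs, Hx].
Qed.

Lemma locally_neq0 (h : R -> R) (p : R) : continuous h p -> h p <> 0 ->
  locally p (fun y => h y <> 0).
Proof.
  intros Hc Hp.
  destruct (continuous_Rabs_lt h p Hc (Rabs (h p)) (Rabs_pos_lt _ Hp)) as [d [Hd Hnear]].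
  exists (mkposreal d Hd); intros y Hy E.
  rewrite ball_Rabs in Hy; specialize (Hnear y Hy).
  rewrite E, Rminus_0_l, Rabs_Ropp in Hnear; lra.
Qed.

Lemma filterlim_within_ex_derive (g : R -> R) (x : R) (D : R -> Prop) :
  ex_derive g x -> filterlim g (within D (locally x)) (locally (g x)).
Proof.
  intros H; eapply filterlim_filter_le_1; [apply filter_le_within |].
  apply (@ex_derive_continuous R_AbsRing R_NormedModule), H.
Qed.

Lemma MVT_strict (u u' : R -> R) (z x : R) :
  x <> z -> (forall y, is_derive u y (u' y)) ->
  exists c, 0 < (c - z) * (x - z) /\ Rabs (c - z) < Rabs (x - z) /\
            u x - u z = u' c * (x - z).
Proof.
  intros Hxz Hu.
  assert (Hu' : forall c, derivable_pt_lim u c (u' c)) by (intro c; apply is_derive_Reals, Hu).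
  destruct (Rlt_or_le z x) as [Hzx | Hxz'].
  - destruct (MVT_cor2 u u' z x Hzx (fun c _ => Hu' c)) as [c [E Hc]].
    exists c; rewrite !Rabs_pos_eq; repeat split; nra.
  - destruct (MVT_cor2 u u' x z ltac:(lra) (fun c _ => Hu' c)) as [c [E Hc]].
    exists c; rewrite !Rabs_left; repeat split; nra.
Qed.

Lemma Cauchy_MVT_strict (u u' v v' : R -> R) (z x : R) :
  x <> z -> (forall y, is_derive u y (u' y)) -> (forall y, is_derive v y (v' y)) ->
  exists c, 0 < (c - z) * (x - z) /\ Rabs (c - z) < Rabs (x - z) /\
            (u x - u z) * v' c = (v x - v z) * u' c.
Proof.
  intros Hxz Hu Hv.
  set (h t := (v x - v z) * u t - (u x - u z) * v t).
  assert (Hh : forall y, is_derive h y ((v x - v z) * u' y - (u x - u z) * v' y)).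
  { intro y; apply (is_derive_minus (fun t => (v x - v z) * u t) (fun t => (u x - u z) * v t));
      apply is_derive_scal; [apply Hu | apply Hv]. }
  destruct (MVT_strict h _ z x Hxz Hh) as [c [Hc1 [Hc2 Hc3]]].
  exists c; repeat split; [exact Hc1 | exact Hc2 |].
  unfold h in Hc3.
  apply (Rmult_eq_reg_r (x - z)); lra.
Qed.

Lemma ratio_bounds_near (a b c : R) : c <> 0 ->
  Rabs (a - c) < Rabs c / 2 -> Rabs (b - c) < Rabs c / 2 -> 0 < a / b < 3.
Proof.
  intros Hc Ha Hb.
  assert (Hbc : 0 < b * c) by (split_Rabs; nra).
  assert (Hac : 0 < a * c) by (split_Rabs; nra).
  assert (Hb0 : b <> 0) by (intro; subst; lra).
  replace (a / b) with ((a * c) / (b * c)) by (field; split; assumption).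
  split; [apply Rdiv_lt_0_compat; lra |].
  apply Rmult_lt_reg_r with (b * c); [exact Hbc |].
  unfold Rdiv; rewrite Rmult_assoc, Rinv_l by lra.
  split_Rabs; nra.
Qed.

Lemma filter_prod_at_right_at_left (p q : R) (P : R -> Prop) : p < q ->
  (forall x, p < x < q -> P x) ->
  filter_prod (at_right p) (at_left q)
    (fun ab => forall x, Rmin (fst ab) (snd ab) <= x <= Rmax (fst ab) (snd ab) -> P x).
Proof.
  intros Hpq HP.
  apply Filter_prod with (fun u => p < u < q) (fun v => p < v < q).
  - exists (mkposreal (q - p) ltac:(lra)); intros y Hy Hpy.
    rewrite ball_Rabs, Rabs_pos_eq in Hy by lra; simpl in Hy; lra.
  - exists (mkposreal (q - p) ltac:(lra)); intros y Hy Hyq.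
    rewrite ball_Rabs, Rabs_left in Hy by lra; simpl in Hy; lra.
  - intros u v Hu Hv x Hx; apply HP; simpl in Hx.
    assert (p < Rmin u v) by (apply Rmin_glb_lt; lra).
    assert (Rmax u v < q) by (apply Rmax_lub_lt; lra).
    lra.
Qed.

Lemma is_RInt_gen_derive_open (G h : R -> R) (p q Lp Lq : R) : p < q ->
  (forall x, p < x < q -> is_derive G x (h x)) -> (forall x, p < x < q -> continuous h x) ->
  filterlim G (at_right p) (locally Lp) -> filterlim G (at_left q) (locally Lq) ->
  is_RInt_gen h (at_right p) (at_left q) (Lq - Lp).
Proof.
  intros Hpq HG Hh HLp HLq.
  apply is_RInt_gen_ext with (Derive G).
  { eapply filter_imp;
      [| apply (filter_prod_at_right_at_left p q (fun x => Derive G x = h x) Hpq)].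
    - intros ab H x Hx; apply H; lra.
    - intros x Hx; apply is_derive_unique, HG, Hx. }
  apply is_RInt_gen_Derive; [| | exact HLp | exact HLq]; apply filter_prod_at_right_at_left; auto.
  - intros x Hx; eexists; apply HG, Hx.
  - intros x Hx; apply continuous_ext_loc with h; [| apply Hh, Hx].
    apply filter_imp with (fun y => p < y < q).
    + intros y Hy; symmetry; apply is_derive_unique, HG, Hy.
    + apply (open_and _ _ (open_gt p) (open_lt q)), Hx.
Qed.

(* Since [a / 0 = 0], the positivity requirement also forces [u x <> 0] and [v x <> 0]. *)
Definition signed_ratio_vanishes (u v : R -> R) (z : R) : Prop :=
  forall eps, 0 < eps -> exists eta, 0 < eta /\
    forall x, 0 < Rabs (x - z) < eta -> 0 < u x / v x * (x - z) /\ Rabs (u x / v x) < eps.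

Lemma ratio_pos_neq0 (a b t : R) : 0 < a / b * t -> a <> 0 /\ b <> 0.
Proof.
  intros H; split; intro E; rewrite E in H; unfold Rdiv in H;
    [rewrite Rmult_0_l in H | rewrite Rinv_0, Rmult_0_r in H]; lra.
Qed.

Lemma signed_ratio_vanishes_simple (u v : R -> R) (z : R) :
  u z = 0 -> (forall y, is_derive u y (v y)) -> continuous v z -> v z <> 0 ->
  signed_ratio_vanishes u v z.
Proof.
  intros Hu0 Hu Hvc Hvz eps Heps.
  assert (Hvz2 : 0 < Rabs (v z) / 2) by (generalize (Rabs_pos_lt _ Hvz); lra).
  destruct (continuous_Rabs_lt v z Hvc _ Hvz2) as [d [Hd Hnear]].
  exists (Rmin d (eps / 3)); split; [apply Rmin_pos; lra |].
  intros x [Hx0 Hx].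
  assert (Hxd : Rabs (x - z) < d) by (eapply Rlt_le_trans; [exact Hx | apply Rmin_l]).
  assert (Hxe : Rabs (x - z) < eps / 3) by (eapply Rlt_le_trans; [exact Hx | apply Rmin_r]).
  assert (Hxz : x <> z) by (intro; subst; rewrite Rminus_diag, Rabs_R0 in Hx0; lra).
  destruct (MVT_strict u v z x Hxz Hu) as [c [_ [Hcz Hc]]].
  rewrite Hu0, Rminus_0_r in Hc.
  destruct (ratio_bounds_near (v c) (v x) (v z) Hvz) as [Hpos H3];
    [apply Hnear; lra | apply Hnear; lra |].
  assert (Hvx : v x <> 0) by (intro E; rewrite E, Rdiv_0_r in Hpos; lra).
  replace (u x / v x) with (v c / v x * (x - z)) by (rewrite Hc; field; exact Hvx).
  split.
  - rewrite Rmult_assoc; apply Rmult_lt_0_compat; [exact Hpos |].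
    apply Rsqr_pos_lt; lra.
  - rewrite Rabs_mult, (Rabs_pos_eq (v c / v x)) by lra.
    apply Rle_lt_trans with (3 * Rabs (x - z)); [| lra].
    apply Rmult_le_compat_r; [apply Rabs_pos | lra].
Qed.

Lemma signed_ratio_vanishes_step (u v w : R -> R) (z : R) :
  u z = 0 -> v z = 0 -> (forall y, is_derive u y (v y)) -> (forall y, is_derive v y (w y)) ->
  signed_ratio_vanishes v w z -> signed_ratio_vanishes u v z.
Proof.
  intros Hu0 Hv0 Hu Hv Hvw eps Heps.
  destruct (Hvw eps Heps) as [eta [Heta Hnear]].
  exists eta; split; [exact Heta |]. intros x Hx.
  assert (Hxz : x <> z) by (intro; subst; rewrite Rminus_diag, Rabs_R0 in Hx; lra).
  destruct (Cauchy_MVT_strict u v v w z x Hxz Hu Hv) as [c [Hcx [Hcz Hc]]].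
  rewrite Hu0, Hv0, !Rminus_0_r in Hc.
  destruct (ratio_pos_neq0 _ _ _ (proj1 (Hnear x Hx))) as [Hvx _].
  destruct (Hnear c) as [Hc_pos Hc_small].
  { split; [apply Rabs_pos_lt; intro E; rewrite E in Hcx; lra | lra]. }
  destruct (ratio_pos_neq0 _ _ _ Hc_pos) as [_ Hwc].
  replace (u x / v x) with (v c / w c)
    by (field_simplify_eq; [lra | split; assumption]).
  split; [| exact Hc_small].
  set (rho := v c / w c) in *.
  assert (Hsq : 0 < (c - z) * (c - z)) by (apply Rsqr_pos_lt; intro E; rewrite E in Hcx; lra).
  apply (Rmult_lt_reg_r _ _ _ Hsq); rewrite Rmult_0_l.
  replace (rho * (x - z) * ((c - z) * (c - z))) with (rho * (c - z) * ((c - z) * (x - z)))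
    by ring.
  apply Rmult_lt_0_compat; assumption.
Qed.

Lemma signed_ratio_vanishes_Derive_n (f : R -> R) (z : R) (r : nat) : smooth f ->
  (forall j, (j < r)%nat -> Derive_n f j z = 0) -> Derive_n f r z <> 0 -> (0 < r)%nat ->
  signed_ratio_vanishes f (Derive f) z.
Proof.
  intros Hs Hz Hr Hr0.
  destruct r as [|r]; [lia |].
  assert (Hd : forall n y, is_derive (Derive_n f n) y (Derive_n f (S n) y))
    by (intros; apply Derive_correct, Hs).
  assert (H : forall m j, (j + m = r)%nat ->
             signed_ratio_vanishes (Derive_n f j) (Derive_n f (S j)) z).
  { induction m as [|m IH]; intros j Hj.
    - replace j with r by lia.
      apply signed_ratio_vanishes_simple;
        [apply Hz; lia | apply Hd | | exact Hr].
      apply (@ex_derive_continuous R_AbsRing R_NormedModule), Hs.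
    - apply signed_ratio_vanishes_step with (Derive_n f (S (S j)));
        [apply Hz; lia | apply Hz; lia | apply Hd | apply Hd | apply IH; lia]. }
  exact (H r 0%nat eq_refl).
Qed.

Lemma ratio_at_right (u v : R -> R) (z : R) : signed_ratio_vanishes u v z ->
  filterlim (fun x => u x / v x) (at_right z) (at_right 0).
Proof.
  intros H P [eps HP].
  destruct (H eps (cond_pos eps)) as [eta [Heta Hnear]].
  exists (mkposreal eta Heta); intros x Hx Hzx; rewrite ball_Rabs in Hx; simpl in Hx.
  destruct (Hnear x) as [Hpos Hsmall]; [rewrite Rabs_pos_eq in *; lra |].
  apply HP; [rewrite ball_Rabs, Rminus_0_r; exact Hsmall |].
  apply (Rmult_lt_reg_r (x - z)); lra.
Qed.

Lemma ratio_at_left (u v : R -> R) (z : R) : signed_ratio_vanishes u v z ->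
  filterlim (fun x => u x / v x) (at_left z) (at_left 0).
Proof.
  intros H P [eps HP].
  destruct (H eps (cond_pos eps)) as [eta [Heta Hnear]].
  exists (mkposreal eta Heta); intros x Hx Hxz; rewrite ball_Rabs in Hx; simpl in Hx.
  destruct (Hnear x) as [Hpos Hsmall]; [rewrite Rabs_left in *; lra |].
  apply HP; [rewrite ball_Rabs, Rminus_0_r; exact Hsmall |].
  apply (Rmult_lt_reg_r (z - x)); [lra |]. nra.
Qed.

Section Telescoping.

Variables (G h : R -> R) (Z : R -> Prop) (b : R).
Hypothesis G_at_right_zero : forall z, Z z -> filterlim G (at_right z) (locally 1).
Hypothesis G_at_left_zero : forall z, Z z -> filterlim G (at_left z) (locally (-1)).
Hypothesis G_derive : forall x, ~ Z x -> is_derive G x (h x).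
Hypothesis h_continuous : forall x, ~ Z x -> continuous h x.
Hypothesis b_not_zero : ~ Z b.

Lemma piecewise_improper_integral_telescope (zs : list R) : forall p Lp,
  filterlim G (at_right p) (locally Lp) -> p < b -> StronglySorted Rlt zs ->
  (forall x, In x zs <-> p < x < b /\ Z x) ->
  piecewise_improper_integral h p (zs ++ b :: nil) (G b - Lp - 2 * INR (length zs)).
Proof.
  assert (HLb : filterlim G (at_left b) (locally (G b)))
    by (apply filterlim_within_ex_derive; eexists; apply G_derive, b_not_zero).
  induction zs as [| z zs IH]; intros p Lp HLp Hpb Hsorted Hzs; cbn [app length].
  - exists (G b - Lp), 0; split; [| split; [reflexivity | simpl; ring]].
    apply (is_RInt_gen_derive_open G); [exact Hpb | | | exact HLp | exact HLb];
      intros x Hx; [apply G_derive | apply h_continuous]; intro Zx; apply (Hzs x); tauto.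
  - inversion Hsorted as [| ? ? Hsorted' Hz_min]; subst.
    rewrite Forall_forall in Hz_min.
    destruct (proj1 (Hzs z) (or_introl eq_refl)) as [Hz_in Zz].
    assert (Hgap : forall x, p < x < z -> ~ Z x).
    { intros x Hx Zx.
      assert (Hin : In x (z :: zs)) by (apply Hzs; split; [split; lra | exact Zx]).
      destruct Hin as [E | Hx']; [lra | specialize (Hz_min x Hx'); lra]. }
    exists (-1 - Lp), (G b - 1 - 2 * INR (length zs)); split; [| split].
    + apply (is_RInt_gen_derive_open G); [lra | | | exact HLp | apply G_at_left_zero, Zz];
        intros x Hx; [apply G_derive | apply h_continuous]; apply Hgap, Hx.
    + apply IH; [apply G_at_right_zero, Zz | lra | exact Hsorted' |].
      intros x; split.
      * intros Hx; specialize (Hz_min x Hx).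
        destruct (proj1 (Hzs x) (or_intror Hx)); split; [lra | assumption].
      * intros [Hx Zx].
        assert (Hin : In x (z :: zs)) by (apply Hzs; split; [split; lra | exact Zx]).
        destruct Hin as [E | Hx']; [lra | exact Hx'].
    + rewrite S_INR; ring.
Qed.

End Telescoping.

Lemma StronglySorted_snoc (l : list R) (c : R) : StronglySorted Rlt l ->
  (forall x, In x l -> x < c) -> StronglySorted Rlt (l ++ c :: nil).
Proof.
  induction l as [| y l IH]; intros Hl Hc; simpl.
  - repeat constructor.
  - inversion Hl as [| ? ? Hl' Hy]; subst; constructor.
    + apply IH; [exact Hl' | intros x Hx; apply Hc; right; exact Hx].
    + apply Forall_app; split; [exact Hy | repeat constructor; apply Hc; left; reflexivity].
Qed.

Definition enumerates_on (Z : R -> Prop) (a t : R) (zs : list R) : Prop :=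
  StronglySorted Rlt zs /\ forall x, In x zs <-> a <= x <= t /\ Z x.

Lemma enumerates_on_extend (Z : R -> Prop) (a t s c : R) (zs : list R) :
  enumerates_on Z a t zs -> t <= s -> (forall x, a <= x -> t < x <= s -> Z x -> x = c) ->
  exists zs', enumerates_on Z a s zs'.
Proof.
  intros [Hsorted Hzs] Hts Hc.
  destruct (classic (a <= c /\ t < c <= s /\ Z c)) as [Hnew | Hnone].
  - exists (zs ++ c :: nil); split.
    + apply StronglySorted_snoc; [exact Hsorted | intros x Hx; apply Hzs in Hx; lra].
    + intros x; rewrite in_app_iff, Hzs; simpl; split.
      * intros [[Hx Zx] | [<- | []]]; [split; [lra | exact Zx] | tauto].
      * intros [Hx Zx]; destruct (Rle_or_lt x t) as [Hxt | Htx];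
          [left; split; [lra | exact Zx] |].
        right; left; symmetry; apply Hc; [lra | lra | exact Zx].
  - exists zs; split; [exact Hsorted |].
    intros x; rewrite Hzs; split; intros [Hx Zx]; split; try exact Zx; [lra |].
    destruct (Rle_or_lt x t) as [Hxt | Htx]; [lra |].
    assert (x = c) by (apply Hc; [lra | lra | exact Zx]); subst; tauto.
Qed.

Lemma isolated_enumerates_on (Z : R -> Prop) (a b : R) :
  (forall c, exists d, 0 < d /\ forall x, 0 < Rabs (x - c) < d -> ~ Z x) -> a <= b ->
  exists zs, enumerates_on Z a b zs.
Proof.
  intros Hiso Hab.
  set (E t := a <= t <= b /\ exists zs, enumerates_on Z a t zs).
  assert (Ea : E a).
  { split; [lra |].
    apply enumerates_on_extend with (a - 1) a nil; [| lra | intros; lra].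
    split; [constructor | intros x; simpl; lra]. }
  destruct (completeness E) as [c [Hub Hlub]];
    [exists b; intros t Et; apply Et | exists a; exact Ea |].
  assert (Hac : a <= c) by (apply Hub, Ea).
  assert (Hcb : c <= b) by (apply Hlub; intros t Et; apply Et).
  destruct (Hiso c) as [d [Hd Hnear]].
  assert (Ht : exists t, E t /\ c - d < t).
  { apply NNPP; intro Hno.
    assert (c <= c - d); [| lra].
    apply Hlub; intros t Et; apply Rnot_lt_le; intro; apply Hno; exists t; tauto. }
  destruct Ht as [t [[Ht [zs Hzs]] Htd]].
  assert (Htc : t <= c) by (apply Hub; split; [exact Ht | exists zs; exact Hzs]).
  assert (Hs : forall s, c <= s < c + d -> exists zs', enumerates_on Z a s zs').
  { intros s Hs; apply enumerates_on_extend with t c zs; [exact Hzs | lra |].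
    intros x _ Hx Zx; apply NNPP; intro Hxc; apply (Hnear x); [| exact Zx].
    split; [apply Rabs_pos_lt; lra | apply Rabs_def1; lra]. }
  destruct (Rlt_or_le b (c + d)) as [Hbd | Hbd]; [apply Hs; lra |].
  assert (c + d / 2 <= c); [apply Hub; split; [lra | apply Hs; lra] | lra].
Qed.

Lemma signed_ratio_vanishes_zero (f : R -> R) (z : R) :
  smooth f -> no_flat_zero f -> f z = 0 -> signed_ratio_vanishes f (Derive f) z.
Proof.
  intros Hs Hn Hz.
  destruct (dec_inh_nat_subset_has_unique_least_element (fun r => Derive_n f r z <> 0))
    as [r [[Hr Hmin] _]].
  { intro n; destruct (Req_dec (Derive_n f n z) 0); tauto. }
  { exact (Hn z Hz). }
  apply signed_ratio_vanishes_Derive_n with r; [exact Hs | | exact Hr |].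
  - intros j Hj; destruct (Req_dec (Derive_n f j z) 0) as [E | E]; [exact E |].
    specialize (Hmin j E); lia.
  - destruct r; [contradiction | lia].
Qed.

Lemma zeros_isolated (f : R -> R) : smooth f -> no_flat_zero f ->
  forall c, exists d, 0 < d /\ forall x, 0 < Rabs (x - c) < d -> f x <> 0.
Proof.
  intros Hs Hn c.
  destruct (Req_dec (f c) 0) as [Hz | Hz].
  - destruct (signed_ratio_vanishes_zero f c Hs Hn Hz 1 Rlt_0_1) as [eta [Heta Hnear]].
    exists eta; split; [exact Heta |].
    intros x Hx; exact (proj1 (ratio_pos_neq0 _ _ _ (proj1 (Hnear x Hx)))).
  - assert (Hc : continuous f c)
      by apply (@ex_derive_continuous R_AbsRing R_NormedModule), (Hs 0%nat).
    destruct (locally_neq0 f c Hc Hz) as [d Hd].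
    exists d; split; [apply cond_pos |].
    intros x Hx; apply Hd, ball_Rabs, Hx.
Qed.

Lemma logder_inv_ratio (f : R -> R) (x : R) : logder f x = / (f x / Derive f x).
Proof. unfold logder; rewrite Rinv_div; reflexivity. Qed.

Lemma F_logder_at_right_zero (f F : R -> R) (z : R) :
  smooth f -> no_flat_zero f -> is_lim F p_infty 1 -> f z = 0 ->
  filterlim (fun x => F (logder f x)) (at_right z) (locally 1).
Proof.
  intros Hs Hn HF Hz.
  apply (filterlim_comp _ _ _ (logder f) F _ (Rbar_locally p_infty)); [| exact HF].
  apply (filterlim_ext (fun x => / (f x / Derive f x)));
    [intro; symmetry; apply logder_inv_ratio |].
  eapply filterlim_comp; [apply ratio_at_right, signed_ratio_vanishes_zero; assumption |].
  apply filterlim_Rinv_0_right.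
Qed.

Lemma F_logder_at_left_zero (f F : R -> R) (z : R) :
  smooth f -> no_flat_zero f -> is_lim F m_infty (-1) -> f z = 0 ->
  filterlim (fun x => F (logder f x)) (at_left z) (locally (-1)).
Proof.
  intros Hs Hn HF Hz.
  apply (filterlim_comp _ _ _ (logder f) F _ (Rbar_locally m_infty)); [| exact HF].
  apply (filterlim_ext (fun x => / (f x / Derive f x)));
    [intro; symmetry; apply logder_inv_ratio |].
  eapply filterlim_comp; [apply ratio_at_left, signed_ratio_vanishes_zero; assumption |].
  apply filterlim_Rinv_0_left.
Qed.

Lemma is_derive_logder (f : R -> R) (x : R) : smooth f -> f x <> 0 ->
  is_derive (logder f) x ((Derive (Derive f) x * f x - Derive f x * Derive f x) / f x ^ 2).
Proof.
  intros Hs Hx; unfold logder.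
  apply (is_derive_div (Derive f) f x);
    [apply Derive_correct, (Hs 1%nat) | apply Derive_correct, (Hs 0%nat) | exact Hx].
Qed.

Lemma continuous_Derive_logder (f : R -> R) (x : R) : smooth f -> f x <> 0 ->
  continuous (Derive (logder f)) x.
Proof.
  intros Hs Hx.
  apply continuous_ext_loc with
    (fun y => (Derive (Derive f) y * f y - Derive f y * Derive f y) / f y ^ 2).
  - apply filter_imp with (fun y => f y <> 0).
    + intros y Hy; symmetry; apply is_derive_unique, is_derive_logder; assumption.
    + apply locally_neq0; [| exact Hx].
      apply (@ex_derive_continuous R_AbsRing R_NormedModule), (Hs 0%nat).
  - apply (@ex_derive_continuous R_AbsRing R_NormedModule).
    auto_derive; repeat split; try apply (Hs 0%nat); try apply (Hs 1%nat); try apply (Hs 2%nat).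
    rewrite Rmult_1_r; apply Rmult_integral_contrapositive_currified; exact Hx.
Qed.

Lemma is_derive_F_logder (f F : R -> R) (x : R) : smooth f -> is_C1 F -> f x <> 0 ->
  is_derive (fun y => F (logder f y)) x (Derive F (logder f x) * Derive (logder f) x).
Proof.
  intros Hs [HF _] Hx.
  assert (Hl : is_derive (logder f) x (Derive (logder f) x))
    by (apply Derive_correct; eexists; apply is_derive_logder; assumption).
  assert (H := is_derive_comp F (logder f) x _ _ (Derive_correct _ _ (HF (logder f x))) Hl).
  rewrite Rmult_comm; exact H.
Qed.

Lemma continuous_F_logder_integrand (f F : R -> R) (x : R) :
  smooth f -> is_C1 F -> f x <> 0 ->
  continuous (fun y => Derive F (logder f y) * Derive (logder f) y) x.
Proof.
  intros Hs [_ HF'] Hx.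
  apply (continuous_mult (fun y => Derive F (logder f y)) (Derive (logder f))).
  - apply (continuous_comp (logder f) (Derive F)); [| apply HF'].
    apply (@ex_derive_continuous R_AbsRing R_NormedModule).
    eexists; apply is_derive_logder; assumption.
  - apply continuous_Derive_logder; assumption.
Qed.

Theorem proposition4 (f F : R -> R) (a b : R) :
  smooth f -> no_flat_zero f ->
  is_C1 F ->
  is_lim F m_infty (-1) -> is_lim F p_infty 1 ->
  a < b -> f a * f b <> 0 ->
  exists zs : list R,
    Sorted Rlt zs /\
    (forall x : R, In x zs <-> (a <= x <= b /\ f x = 0)) /\
    exists I : R,
      piecewise_improper_integral
        (fun x => Derive F (logder f x) * Derive (logder f) x) a (zs ++ b :: nil) I /\
      INR (length zs) = / 2 * (F (logder f b) - F (logder f a) - I).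
Proof.
  intros Hs Hn HF HFm HFp Hab Hfab.
  assert (Ha : f a <> 0) by (intro E; apply Hfab; rewrite E; ring).
  assert (Hb : f b <> 0) by (intro E; apply Hfab; rewrite E; ring).
  destruct (isolated_enumerates_on (fun x => f x = 0) a b (zeros_isolated f Hs Hn))
    as [zs [Hsorted Hzs]]; [lra |].
  exists zs; split; [apply StronglySorted_Sorted, Hsorted | split; [exact Hzs |]].
  set (G x := F (logder f x)).
  exists (G b - G a - 2 * INR (length zs)); split; [| unfold G; field].
  apply (piecewise_improper_integral_telescope G _ (fun x => f x = 0)).
  - intros z; apply F_logder_at_right_zero; assumption.
  - intros z; apply F_logder_at_left_zero; assumption.
  - intros x; apply is_derive_F_logder; assumption.
  - intros x; apply continuous_F_logder_integrand; assumption.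
  - exact Hb.
  - apply filterlim_within_ex_derive; eexists; apply is_derive_F_logder; assumption.
  - exact Hab.
  - exact Hsorted.
  - intros x; rewrite Hzs; split; intros [Hx Zx]; split; try exact Zx; [| lra].
    destruct Hx as [[Hax | <-] [Hxb | ->]]; [lra | contradiction ..].
Qed.
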